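(* For every $n\ge1$, no locally valid MV assignment of $M_{2,n}$ has exactly $2n-1$ flippable faces; equivalently, no vertex of ${\rm OFG}(M_{2,n})$ has degree $2n-1$.
   Context: The $2\times n$ Miura-ori $M_{2,n}$ ($n\ge1$) has faces $\alpha_{i,j}$ ($i\in\{1,2\}$, $j\in\{1,\dots,n\}$), interior vertices $x_1,\dots,x_{n-1}$, and creases $e_0$ and $e_{3k-1},e_{3k},e_{3k+1}$ ($k=1,\dots,n-1$). At $x_k$ the creases are left $e_{3k-3}$, top $e_{3k-1}$, right $e_{3k}$, bottom $e_{3k+1}$. Face $\alpha_{1,j}$ is bordered by those of $e_{3j-4}$ (iff $j\ge2$), $e_{3j-3}$, $e_{3j-1}$ (iff $j\le n-1$); $\alpha_{2,j}$ by those of $e_{3j-2}$ (iff $j\ge2$), $e_{3j-3}$, $e_{3j+1}$ (iff $j\le n-1$). An MV assignment $\mu$ maps creases to $\{1,-1\}$; it is locally valid if for each $k$ exactly one of $\mu(e_{3k-1}),\mu(e_{3k}),\mu(e_{3k+1})$ differs from $\mu(e_{3k-3})$. The face flip $\mu_\alpha$ negates $\mu$ on the creases bordering $\alpha$; $\alpha$ is flippable under $\mu$ if $\mu,\mu_\alpha$ are both locally valid. ${\rm OFG}(M_{2,n})$ has the locally valid assignments as vertices, with $\mu\sim\mu_\alpha$ for each flippable $\alpha$; the degree of $\mu$ is its number of flippable faces. *)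

From mathcomp Require Import all_boot.
Unset Implicit Arguments. Unset Printing Implicit Defensive.

(* Creases are named by natural numbers:
   e_0 and e_{3k-1}, e_{3k}, e_{3k+1} for k = 1..n-1.
   An MV assignment is a function mu : nat -> bool on crease indices
   (true = mountain = 1, false = valley = -1); only its values on the
   creases of M_{2,n} matter. *)

Definition mv := nat -> bool.

(* local validity at interior vertex x_k (1 <= k <= n-1): exactly one of
   mu(top), mu(right), mu(bottom) differs from mu(left) *)
Definition valid_at (mu : mv) (k : nat) : bool :=
  let l := mu (3 * k - 3) in
  (mu (3 * k - 1) != l) + (mu (3 * k) != l) + (mu (3 * k + 1) != l) == 1.

Definition locally_valid (n : nat) (mu : mv) : bool :=
  [forall k : 'I_n, (0 < k) ==> valid_at mu k].

(* Faces alpha_{i,j}, i in {1,2}, j in {1..n}, encoded as (b, j') with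
   b = false for i = 1, b = true for i = 2, and j' : 'I_n, j = j'+1. *)
Definition face (n : nat) := (bool * 'I_n)%type.

Definition borders (n : nat) (a : face n) (c : nat) : bool :=
  let j := (a.2 : nat).+1 in
  if ~~ a.1 then
    ((2 <= j) && (c == 3 * j - 4)) || (c == 3 * j - 3) ||
    ((j <= n - 1) && (c == 3 * j - 1))
  else
    ((2 <= j) && (c == 3 * j - 2)) || (c == 3 * j - 3) ||
    ((j <= n - 1) && (c == 3 * j + 1)).

Definition flip (n : nat) (mu : mv) (a : face n) : mv :=
  fun c => if borders n a c then ~~ mu c else mu c.

Definition flippable (n : nat) (mu : mv) (a : face n) : bool :=
  locally_valid n mu && locally_valid n (flip n mu a).

Definition degree (n : nat) (mu : mv) : nat :=
  #|[pred a : face n | flippable n mu a]|.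

From mathcomp Require Import all_boot zify.

(* A face fails to be flippable only because its flip breaks local validity
   at some vertex x_k, and x_k must be a corner of the face.  At x_k the face
   touches two of the four creases, and the diagonally opposite face (other
   row, other side of x_k) touches exactly the other two.  Flipping one face
   instead of the other therefore changes the assignment at x_k by negating
   all four creases, which preserves validity at x_k; so the opposite face is
   not flippable either.  Non-flippable faces thus never occur alone, while
   degree 2n-1 would leave exactly one of the 2n faces non-flippable. *)

Definition at_vertex (k c : nat) : Prop :=
  [\/ c = 3 * k - 3, c = 3 * k - 1, c = 3 * k | c = 3 * k + 1].

Lemma valid_at_addb (e : bool) (mu nu : mv) k :
  (forall c, at_vertex k c -> nu c = mu c (+) e) -> valid_at nu k = valid_at mu k.
Proof.
move=> nuE; rewrite /valid_at !nuE;
  try by [exact: Or41 | exact: Or42 | exact: Or43 | exact: Or44].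
by case: (e); case: (mu (3 * k - 3)); case: (mu (3 * k - 1));
   case: (mu (3 * k)); case: (mu (3 * k + 1)).
Qed.

Lemma flipE n mu (a : face n) c : flip n mu a c = mu c (+) borders n a c.
Proof. by rewrite /flip; case: (borders n a c); case: (mu c). Qed.

Ltac decide_nat_atoms :=
  repeat match goal with
  | |- context [?m == ?p :> nat] =>
      first [ rewrite (_ : (m == p) = true); last by apply/eqP; lia
            | rewrite (_ : (m == p) = false); last by apply/eqP; lia ]
  | |- context [?m <= ?p] =>
      first [ rewrite (_ : (m <= p) = true); last by apply/idP; lia
            | rewrite (_ : (m <= p) = false); last by apply/negbTE/negP; lia ]
  end.

Section Vertex.

Context {n k : nat}.
Hypothesis interior_k : 1 <= k <= n - 1.

Lemma borders_far (a : face n) c :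
  (a.2 : nat) <> k - 1 -> (a.2 : nat) <> k -> at_vertex k c -> borders n a c = false.
Proof.
by move=> ak1 ak; rewrite /borders; case=> ->; case: (a.1); decide_nat_atoms;
   rewrite /= ?andbF ?orbF ?andbT ?orbT.
Qed.

Lemma borders_opposite [a a' : face n] [c : nat] :
  a'.1 = ~~ a.1 ->
  (a.2 : nat) = k - 1 /\ (a'.2 : nat) = k \/ (a.2 : nat) = k /\ (a'.2 : nat) = k - 1 ->
  at_vertex k c -> borders n a' c = ~~ borders n a c.
Proof.
by rewrite /borders => -> /= [] [-> ->] [] ->; case: (a.1); decide_nat_atoms;
   rewrite /= ?andbF ?orbF ?andbT ?orbT.
Qed.

Lemma valid_at_flip_far mu (a : face n) :
  (a.2 : nat) <> k - 1 -> (a.2 : nat) <> k -> valid_at (flip n mu a) k = valid_at mu k.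
Proof.
move=> ak1 ak; apply: (valid_at_addb false) => c kc.
by rewrite flipE borders_far.
Qed.

Lemma valid_at_flip_opposite mu [a a' : face n] :
  a'.1 = ~~ a.1 ->
  (a.2 : nat) = k - 1 /\ (a'.2 : nat) = k \/ (a.2 : nat) = k /\ (a'.2 : nat) = k - 1 ->
  valid_at (flip n mu a') k = valid_at (flip n mu a) k.
Proof.
move=> a'1 a'2; apply: (valid_at_addb true) => c kc.
by rewrite !flipE (borders_opposite a'1 a'2 kc); case: (mu c); case: (borders n a c).
Qed.

End Vertex.

Lemma nonflippable_partner [n mu] [a : face n] :
  locally_valid n mu -> ~~ flippable n mu a ->
  exists2 a', ~~ flippable n mu a' & a' != a.
Proof.
move=> mu_valid; rewrite {1}/flippable mu_valid /=.
case/forallPn=> k; rewrite negb_imply => /andP[k_gt0 k_invalid].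
have k_int : 1 <= k <= n - 1 by have := ltn_ord k; lia.
have opposite_nonflippable (a' : face n) : a'.1 = ~~ a.1 ->
    (a.2 : nat) = k - 1 /\ (a'.2 : nat) = k \/ (a.2 : nat) = k /\ (a'.2 : nat) = k - 1 ->
    exists2 a', ~~ flippable n mu a' & a' != a.
  move=> a'1 a'2; exists a'; last by apply/eqP => a'a; move: a'1; rewrite a'a; case: (a.1).
  rewrite /flippable mu_valid /=; apply/forallPn; exists k.
  by rewrite k_gt0 (valid_at_flip_opposite k_int mu a'1 a'2).
have [[ak1 | ak] | [ak1 ak]] :
    ((a.2 : nat) = k - 1 \/ (a.2 : nat) = k) \/ ((a.2 : nat) <> k - 1 /\ (a.2 : nat) <> k).
  by lia.
- by apply: (opposite_nonflippable (~~ a.1, k)) => //; left.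
- have k1_lt_n : k - 1 < n by lia.
  by apply: (opposite_nonflippable (~~ a.1, Ordinal k1_lt_n)) => //; right.
- move: k_invalid; rewrite (valid_at_flip_far k_int) //.
  by move/forallP/(_ k)/implyP/(_ k_gt0): mu_valid => ->.
Qed.

Lemma card_neq_predn (T : finType) (A : {pred T}) :
  0 < #|T| -> (forall x, x \notin A -> exists2 y, y \notin A & y != x) ->
  #|A| != #|T|.-1.
Proof.
move=> T_gt0 partner; apply/eqP => cardA.
have cardCA : #|[predC A]| = 1 by have := cardC A; rewrite cardA; lia.
have [x Ax] : exists x, x \in [predC A] by apply/card_gt0P; rewrite cardCA.
have [y Ay yx] := partner x Ax.
move/card_le1_eqP: (eq_leq cardCA) => /(_ y x Ay Ax) yx_eq.
by rewrite yx_eq eqxx in yx.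
Qed.

Theorem lemma4p8 (n : nat) (mu : mv) :
  1 <= n -> locally_valid n mu -> degree n mu != (2 * n).-1.
Proof.
move=> n_gt0 mu_valid.
have card_faces : #|{: face n}| = 2 * n by rewrite card_prod card_bool card_ord.
rewrite /degree -card_faces; apply: card_neq_predn => [|a]; first by rewrite card_faces; lia.
by rewrite !inE => /(nonflippable_partner mu_valid).
Qed.
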